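(* Let $q$ be a prime power, let $\lambda \in \mathbb{F}_{q^n}\setminus\mathbb{F}_q$, $t = [\mathbb{F}_q(\lambda):\mathbb{F}_q]$, let $0 < m < t$, let $\overline{S}$ be an $\mathbb{F}_{q^t}$-subspace of $\mathbb{F}_{q^n}$ of $\mathbb{F}_{q^t}$-dimension $l>0$ with $\overline{S} \cap \mathbb{F}_{q^t} = \{0\}$, and let $S = \overline{S} \oplus \langle 1, \lambda, \ldots, \lambda^{m-1}\rangle_{\mathbb{F}_q}$. If $b \in \mathbb{F}_{q^t}^*$, then \[ S \cap bS = \overline{S} \oplus \left(\langle 1, \lambda, \ldots, \lambda^{m-1}\rangle_{\mathbb{F}_q} \cap b\langle 1, \lambda, \ldots, \lambda^{m-1}\rangle_{\mathbb{F}_q}\right). \] *)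

From HB Require Import structures.
From mathcomp Require Import all_boot all_order all_algebra all_field.
Set Implicit Arguments. Unset Strict Implicit. Unset Printing Implicit Defensive.
Import GRing.Theory.
Local Open Scope ring_scope.
Local Open Scope vspace_scope.

Definition powspan (F : fieldType) (L : fieldExtType F) (lam : L) (m : nat)
  : {vspace L} := <<[seq (lam ^+ i)%R | i <- iota 0 m]>>%VS.

From HB Require Import structures.
From mathcomp Require Import all_boot all_order all_algebra all_field.
Import GRing.Theory.
Local Open Scope ring_scope.

(* Multiplication by [b] maps the [F_q(lambda)]-space [Sbar] injectively into
   itself, hence fixes it, so [S :&: b S = (Sbar + P) :&: (Sbar + b P)]
   with [P] the span of the powers of [lambda]. Both [P] and [b P] lie in the field
   [F_q(lambda)], which meets [Sbar] trivially; hence the two decompositions of an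
   element of the intersection must agree componentwise. *)

Lemma capv_add2l_disjoint (K : fieldType) (vT : vectType K) (U V W : {vspace vT}) :
  (U :&: (V + W) = 0)%VS -> ((U + V) :&: (U + W) = U + (V :&: W))%VS.
Proof.
move=> UVW0; apply/eqP; rewrite eqEsubv subv_cap !addvS ?capvSl ?capvSr //= andbT.
apply/subvP=> _ /memv_capP[/memv_addP[u1 Uu1 [v Vv ->]] /memv_addP[u2 Uu2 [w Ww e]]].
have u12 : u1 - u2 = w - v by rewrite -[u1](addrK v) e addrAC [u2 + w]addrC addrK.
have : u1 - u2 \in (U :&: (V + W))%VS by rewrite memv_cap rpredB // u12 addrC memv_add ?rpredN.
rewrite UVW0 memv0 u12 subr_eq0 => /eqP wv.
by apply: memv_add; rewrite // memv_cap Vv -wv.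
Qed.

Section FieldExtension.

Variables (F : fieldType) (L : fieldExtType F).
Implicit Types (K : {subfield L}) (V : {vspace L}).

Lemma line_prodv_id V b : b != 0 -> (<[b]> * V <= V)%VS -> (<[b]> * V)%VS = V.
Proof.
rewrite prodvC => nz_b bVV; apply/eqP.
by rewrite -dimv_leqif_eq // dim_cosetv_unit ?unitfE.
Qed.

Lemma powspan_sub K lam m : lam \in K -> (powspan lam m <= K)%VS.
Proof. by move=> Klam; apply/span_subvP => _ /mapP[i _ ->]; rewrite rpredX. Qed.

End FieldExtension.

Theorem lemma4p4 (F : finFieldType) (L : fieldExtType F) (lam : L)
  (lam_notin : lam \notin 1%VS)
  (t m l : nat) (ht : t = \dim <<1%VS; lam>>%VS)
  (hm0 : (0 < m)%N) (hmt : (m < t)%N)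
  (Sbar : {vspace L})
  (hSbar_mod : (<<1%VS; lam>>%VS * Sbar <= Sbar)%VS)
  (hl : (0 < l)%N) (hdim : \dim Sbar = (l * t)%N)
  (hcap : (Sbar :&: <<1%VS; lam>>%VS)%VS = 0%VS)
  (S : {vspace L}) (hS : S = (Sbar + powspan lam m)%VS)
  (b : L) (hb : b \in <<1%VS; lam>>%VS) (hb0 : b != 0) :
  (S :&: (<[b]> * S))%VS
    = (Sbar + (powspan lam m :&: (<[b]> * powspan lam m)))%VS.
Proof.
set K := <<1%VS; lam>>%AS.
have P_K : (powspan lam m <= K)%VS by rewrite powspan_sub ?memv_adjoin.
have bSbar : (<[b]> * Sbar)%VS = Sbar.
  by rewrite line_prodv_id // (subv_trans _ hSbar_mod) ?prodvSl -?memvE.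
rewrite hS prodvDr bSbar capv_add2l_disjoint //.
apply/eqP; rewrite -subv0 -hcap capvS // subv_add P_K prodv_sub // -memvE.
Qed.
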